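(* Let $G=(V,E)$ be a graph with adjacency matrix $A=(a_{ij})$. Assume $f_\pi:\mathcal{A}_{RW}(G)\to\mathcal{A}(G)$ is an isomorphism of the form $f_\pi(e_i)=\alpha_i e_{\pi(i)}$ for all $i\in V$, where $\alpha_i\neq0$ are scalars and $\pi$ is a permutation of $V$. Then $$a_{i\,\pi^{-1}(k)}\,\alpha_{\pi^{-1}(k)}=\deg(i)\,\alpha_i^2\,a_{\pi(i)\,k}\quad\text{for all } i,k\in V.$$
   Context: Graphs are simple (no loops or multiple edges), connected, with countable (finite or infinite) vertex set $V$, and locally finite ($\deg(i)<\infty$ for all $i$, where $\deg(i)$ is the number of neighbors of $i$). The adjacency matrix is $A=(a_{ij})$ with $a_{ij}=1$ if $i,j$ are neighbors and $0$ otherwise. An evolution algebra over $\mathbb{R}$ is an algebra with a countable basis $\{e_i\}$ (natural basis) such that $e_i\cdot e_j=0$ for $i\ne j$ and $e_i\cdot e_i=\sum_k c_{ik}e_k$. $\mathcal{A}(G)$ has natural basis $\{e_i:i\in V\}$ with $e_i\cdot e_i=\sum_{k\in V}a_{ik}e_k$; $\mathcal{A}_{RW}(G)$ has natural basis $\{e_i:i\in V\}$ with $e_i\cdot e_i=\sum_{k\in V}\frac{a_{ik}}{\deg(i)}e_k$; in both, $e_i\cdot e_j=0$ for $i\ne j$. An isomorphism is a bijective linear map preserving the product. *)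

From HB Require Import structures.
From mathcomp Require Import all_boot all_order all_algebra.
From mathcomp Require Import finmap.
From mathcomp Require Import boolp classical_sets functions cardinality fsbigop reals.
Set Implicit Arguments. Unset Strict Implicit. Unset Printing Implicit Defensive.
Import Order.TTheory GRing.Theory Num.Theory.
Local Open Scope classical_set_scope.
Local Open Scope ring_scope.

Section Graphs.
Variable V : countType.
Variable adj : rel V.

Definition simple_graph : Prop := irreflexive adj /\ symmetric adj.

Definition connected_graph : Prop :=
  forall i j : V, exists p : seq V, path adj i p /\ last i p = j.

Definition locally_finite : Prop :=
  forall i : V, finite_set [set j | adj i j].

Definition deg (i : V) : nat := (#|` fset_set [set j | adj i j]|)%fset.

Variable R : realType.

Definition amat (i j : V) : R := (adj i j)%:R.

Definition c_adj (i k : V) : R := amat i k.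
Definition c_rw (i k : V) : R := amat i k / (deg i)%:R.
End Graphs.

Section EvolutionAlgebra.
Variables (V : countType) (R : realType).

(* An evolution algebra with natural basis {e_i : i in V} is realized on the
   space of finitely supported coordinate vectors V -> R. *)
Definition fsupp (x : V -> R) : Prop := finite_set [set v | x v != 0].

Definition ebasis (i : V) : V -> R := fun j => if j == i then 1 else 0.

(* product with structure constants C:  e_i . e_j = 0 (i<>j),
   e_i . e_i = sum_k C i k e_k, extended bilinearly. *)
Definition evprod (C : V -> V -> R) (x y : V -> R) : V -> R :=
  fun k => \sum_(i \in [set: V]) (x i * y i * C i k).

Definition ev_isomorphism (C1 C2 : V -> V -> R) (f : (V -> R) -> (V -> R)) : Prop :=
  [/\ (forall x, fsupp x -> fsupp (f x)),
      (forall (a : R) x y, fsupp x -> fsupp y ->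
          f (fun v => a * x v + y v) = (fun v => a * f x v + f y v)),
      (forall x y, fsupp x -> fsupp y -> f x = f y -> x = y),
      (forall y, fsupp y -> exists2 x, fsupp x & f x = y) &
      (forall x y, fsupp x -> fsupp y -> f (evprod C1 x y) = evprod C2 (f x) (f y))].
End EvolutionAlgebra.

From HB Require Import structures.
From mathcomp Require Import all_boot all_order all_algebra.
From mathcomp Require Import finmap.
From mathcomp Require Import boolp classical_sets functions cardinality fsbigop reals.
Set Implicit Arguments. Unset Strict Implicit. Unset Printing Implicit Defensive.
Import Order.TTheory GRing.Theory Num.Theory.
Local Open Scope ring_scope.

(* Apply the isomorphism to the identity e_i e_i = sum_k a_ik / deg(i) e_k of
   A_RW(G).  Since f sends e_j to alpha_j e_(pi j), the k-th coordinate of the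
   image of a finitely supported x is x(pi^-1 k) alpha(pi^-1 k), while the right
   side is alpha_i^2 e_(pi i) e_(pi i) = alpha_i^2 sum_k a_(pi i) k e_k.  Comparing
   coordinates and clearing deg(i) gives the identity; when deg(i) = 0 the vertex
   i is isolated and both sides vanish. *)

Section FiniteSupport.
Variables (V : countType) (R : realType).

Lemma fsupp_seq (x : V -> R) (s : seq V) :
  (forall v, x v != 0 -> v \in s) -> fsupp x.
Proof. by move=> xs; apply: (sub_finite_set _ (finite_seq s)) => v /= /xs. Qed.

Lemma fsupp0 : fsupp (fun _ : V => 0 : R).
Proof. by apply: (@fsupp_seq _ [::]) => v; rewrite eqxx. Qed.

Lemma fsupp_ebasis (i : V) : fsupp (ebasis R i).
Proof.
apply: (@fsupp_seq _ [:: i]) => v; rewrite /ebasis mem_seq1.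
by case: (v == i); rewrite ?eqxx.
Qed.

Lemma evprod_scale_ebasis (C : V -> V -> R) (i : V) (a b : R) :
  evprod C (fun j => a * ebasis R i j) (fun j => b * ebasis R i j)
  = (fun k => a * b * C i k).
Proof.
apply: funext => k; rewrite /evprod -(fsbig_widen [set i]) //; last first.
  by move=> j [_ /= /eqP nji]; rewrite /ebasis (negbTE nji) !mulr0 !mul0r.
by rewrite fsbig_set1 /ebasis eqxx !mulr1.
Qed.

Lemma evprod_ebasis (C : V -> V -> R) (i : V) :
  evprod C (ebasis R i) (ebasis R i) = C i.
Proof.
have e1 : ebasis R i = (fun j => 1 * ebasis R i j).
  by apply: funext => j; rewrite mul1r.
by rewrite e1 evprod_scale_ebasis; apply: funext => k; rewrite !mul1r.
Qed.

End FiniteSupport.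

Section MonomialMap.
Variables (V : countType) (R : realType) (f : (V -> R) -> (V -> R)).
Variables (alpha : V -> R) (pi piinv : V -> V).
Hypotheses (piK : cancel pi piinv) (piinvK : cancel piinv pi).
Hypothesis f_ebasis : forall i, f (ebasis R i) = (fun j => alpha i * ebasis R (pi i) j).
Hypothesis f_linear : forall (a : R) x y, fsupp x -> fsupp y ->
  f (fun v => a * x v + y v) = (fun v => a * f x v + f y v).

Lemma monomial_map0 : f (fun _ => 0) = (fun _ => 0).
Proof.
have := @f_linear (-1) _ _ (fsupp0 V R) (fsupp0 V R).
rewrite mulr0 addr0 => ->.
by apply: funext => v; rewrite mulN1r addNr.
Qed.

Lemma monomial_map_seq (s : seq V) (x : V -> R) :
  (forall v, x v != 0 -> v \in s) ->
  f x = (fun k => x (piinv k) * alpha (piinv k)).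
Proof.
elim: s x => [|j s IH] x xs.
  have -> : x = (fun _ => 0).
    by apply: funext => v; apply/eqP/negPn/negP => /xs.
  by rewrite monomial_map0; apply: funext => k; rewrite mul0r.
pose y v := if v == j then 0 else x v.
have ys v : y v != 0 -> v \in s.
  rewrite /y; case: (eqVneq v j) => [_|vj /xs]; first by rewrite eqxx.
  by rewrite in_cons (negbTE vj).
have -> : x = (fun v => x j * ebasis R j v + y v).
  by apply: funext => v; rewrite /y /ebasis; case: eqP => [->|_];
    rewrite ?mulr1 ?addr0 ?mulr0 ?add0r.
rewrite f_linear ?f_ebasis ?(IH _ ys); last exact: fsupp_seq ys; last exact: fsupp_ebasis.
apply: funext => k; rewrite /y /ebasis.
have [<-|nj] := eqVneq (piinv k) j; first by rewrite piinvK eqxx !mulr1 mul0r !addr0.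
have -> : (k == pi j) = false by apply: contraNF nj => /eqP ->; rewrite piK.
by rewrite !mulr0 !add0r.
Qed.

Lemma monomial_map_fsupp (x : V -> R) :
  fsupp x -> f x = (fun k => x (piinv k) * alpha (piinv k)).
Proof.
move=> /finite_seqP[s xs]; apply: (@monomial_map_seq s) => v xv.
by have : [set v | x v != 0]%classic v by []; rewrite xs.
Qed.

End MonomialMap.

Section LocallyFinite.
Variables (V : countType) (adj : rel V) (R : realType).
Hypothesis lf : locally_finite adj.

Lemma fsupp_c_rw (i : V) : fsupp (c_rw adj R i).
Proof.
apply: sub_finite_set (lf i) => v /=; rewrite /c_rw /amat.
by case: (adj i v); rewrite // mul0r eqxx.
Qed.

Lemma deg0_adj (i j : V) : deg adj i = 0%N -> adj i j = false.
Proof.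
rewrite /deg => /cardfs0_eq/(fset_set_set0 (lf i))/(congr1 (fun P => P j)) /= aij.
by apply/negP; rewrite aij.
Qed.

End LocallyFinite.

Theorem proposition2p13 (V : countType) (adj : rel V) (R : realType)
    (f : (V -> R) -> (V -> R)) (alpha : V -> R) (pi piinv : V -> V) :
  simple_graph adj -> connected_graph adj -> locally_finite adj ->
  cancel pi piinv -> cancel piinv pi ->
  (forall i, alpha i != 0) ->
  (forall i, f (ebasis R i) = (fun j => alpha i * ebasis R (pi i) j)) ->
  ev_isomorphism (c_rw adj R) (c_adj adj R) f ->
  forall i k : V,
    amat adj R i (piinv k) * alpha (piinv k)
    = (deg adj i)%:R * alpha i ^+ 2 * amat adj R (pi i) k.
Proof.
move=> _ _ lf piK piinvK _ f_ebasis [_ f_linear _ _ f_hom] i k.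
have := f_hom _ _ (fsupp_ebasis R i) (fsupp_ebasis R i).
rewrite evprod_ebasis f_ebasis evprod_scale_ebasis.
rewrite (monomial_map_fsupp piK piinvK f_ebasis f_linear (fsupp_c_rw R lf i)).
move=> /(congr1 (fun g => g k)); rewrite /c_rw /c_adj /= -expr2 => coord_k.
have [d0|dn0] := eqVneq (deg adj i) 0%N.
  by rewrite d0 /amat deg0_adj // !mul0r.
by rewrite -mulrA -coord_k mulrA mulrCA mulfV ?mulr1 // pnatr_eq0.
Qed.
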